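(* Let $\boldsymbol z\in\{0,1\}^n$ and $\boldsymbol y\in\mathbb R^n$. Let $\mathcal Z_1=\{i:z_i=1\}$, $n_1=|\mathcal Z_1|$, and write $\mathcal Z_1=\{j_1,\dots,j_{n_1}\}$ with $\mathrm{rank}_{j_1}(\boldsymbol y)<\dots<\mathrm{rank}_{j_{n_1}}(\boldsymbol y)$. For an integer $0\le L\le n_1$, $c\in\mathbb R$ and $\kappa>0$, let $\mathcal H_L=\{\boldsymbol\delta\in\mathbb R^n:\sum_{i\in\mathcal Z_1}\mathbf 1(\delta_i>c)\le L\}$, $\mathcal A_L=\{j_{n_1-L+1},\dots,j_{n_1}\}$ if $L\ge1$ and $\mathcal A_0=\emptyset$, $\gamma=\max\{y_i:z_i=1\}-\min\{y_i:z_i=0\}+\kappa$, and $\boldsymbol\eta_L\in\mathbb R^n$ with $\eta_{L,i}=\gamma$ for $i\in\mathcal A_L$ and $\eta_{L,i}=c$ otherwise. Then for every $\boldsymbol\delta\in\mathcal H_L$: (i) for each $1\le k\le n_1$, the $k$-th smallest element of $\{\mathrm{rank}_i(\boldsymbol y-\boldsymbol z\circ\boldsymbol\delta):z_i=1\}$ is at least the $k$-th smallest element of $\{\mathrm{rank}_i(\boldsymbol y-\boldsymbol z\circ\boldsymbol\eta_L):z_i=1\}$; (ii) for each $1\le k\le n-n_1$, the $k$-th smallest element of $\{\mathrm{rank}_i(\boldsymbol y-\boldsymbol z\circ\boldsymbol\delta):z_i=0\}$ is at most the $k$-th smallest element of $\{\mathrm{rank}_i(\boldsymbol y-\boldsymbol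 z\circ\boldsymbol\eta_L):z_i=0\}$.
   Context: For $1\le i,j\le n$ and $y,y'\in\mathbb R$, $\psi_{i,j}(y,y')=\mathbf 1\{y>y'\}+\mathbf 1\{y=y'\}\mathbf 1\{i\ge j\}$; for $\boldsymbol y\in\mathbb R^n$, $\mathrm{rank}_i(\boldsymbol y)=\sum_{j=1}^n\psi_{i,j}(y_i,y_j)$ (a permutation of $\{1,\dots,n\}$). $\circ$ denotes the entrywise product. *)

From mathcomp Require Import all_boot all_order all_algebra.
Set Implicit Arguments. Unset Strict Implicit. Unset Printing Implicit Defensive.
Import Order.TTheory GRing.Theory Num.Theory.
Local Open Scope ring_scope.

Definition psi (R : realFieldType) (n : nat) (i j : 'I_n) (a b : R) : nat :=
  addn (nat_of_bool (b < a)) (nat_of_bool ((a == b) && (j <= i)%N)).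

Definition rank (R : realFieldType) (n : nat) (w : 'I_n -> R) (i : 'I_n) : nat :=
  (\sum_(j < n) psi i j (w i) (w j))%N.

Definition kth_smallest (s : seq nat) (k : nat) : nat :=
  nth 0%N (sort leq s) k.-1.

Definition shift (R : realFieldType) (n : nat) (y : 'I_n -> R) (z : 'I_n -> bool)
  (d : 'I_n -> R) : 'I_n -> R := fun i => y i - (if z i then d i else 0).

Definition ranks_in (R : realFieldType) (n : nat) (w : 'I_n -> R) (z : 'I_n -> bool)
  (b : bool) : seq nat := [seq rank w i | i <- enum 'I_n & z i == b].

Definition n1 (n : nat) (z : 'I_n -> bool) : nat := #|[set i | z i]|.

Definition treated_sorted (R : realFieldType) (n : nat) (y : 'I_n -> R)
  (z : 'I_n -> bool) : seq 'I_n :=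
  sort (fun a b => leq (rank y a) (rank y b)) [seq i <- enum 'I_n | z i].

Definition A_L (R : realFieldType) (n : nat) (y : 'I_n -> R) (z : 'I_n -> bool)
  (L : nat) : seq 'I_n := drop (n1 z - L) (treated_sorted y z).

(* max{y_i : z_i = 1}, min{y_i : z_i = 0}  (0 by convention if the set is empty) *)
Definition max_treated (R : realFieldType) (n : nat) (y : 'I_n -> R)
  (z : 'I_n -> bool) : R :=
  if [pick i | z i] is Some i0 then \big[Num.max/y i0]_(i | z i) y i else 0.
Definition min_control (R : realFieldType) (n : nat) (y : 'I_n -> R)
  (z : 'I_n -> bool) : R :=
  if [pick i | ~~ z i] is Some i0 then \big[Num.min/y i0]_(i | ~~ z i) y i else 0.

Definition gamma (R : realFieldType) (n : nat) (y : 'I_n -> R) (z : 'I_n -> bool)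
  (kappa : R) : R := max_treated y z - min_control y z + kappa.

Definition eta_L (R : realFieldType) (n : nat) (y : 'I_n -> R) (z : 'I_n -> bool)
  (L : nat) (c kappa : R) : 'I_n -> R :=
  fun i => if i \in A_L y z L then gamma y z kappa else c.

Definition in_H_L (R : realFieldType) (n : nat) (z : 'I_n -> bool) (L : nat)
  (c : R) (d : 'I_n -> R) : Prop :=
  (#|[set i | z i && (c < d i)%R]| <= L)%N.

(** The ranks [rank w i] form a permutation of [1..n], so the k-th smallest
    rank of a group is governed by how many of its ranks are at most [x], for
    every [x], and the treated counts are the complements of the control
    counts.  Both claims therefore reduce to one pointwise fact: every control
    unit ranks at least as high under [eta_L] as under any [delta] in [H_L].
    Indeed [eta_L] pushes the [L] top-ranked treated units below all controls
    and shifts every other treated unit by exactly [c], whereas [delta] pushes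
    at most [L] treated units further down than [c] does. *)
From mathcomp Require Import all_boot all_order all_algebra.
From mathcomp Require Import lra.
Set Implicit Arguments.
Unset Strict Implicit.
Unset Printing Implicit Defensive.

Import Order.TTheory GRing.Theory Num.Theory.
Local Open Scope ring_scope.

Section KeyRank.
Variables (d : Order.disp_t) (U : orderType d) (T : finType) (key : T -> U).

Definition key_rank (i : T) : nat := #|[set j | (key j <= key i)%O]|.

Lemma leq_key_rank a b : (key_rank a <= key_rank b)%N = (key a <= key b)%O.
Proof.
apply/idP/idP => [|le_ab]; last first.
  by apply/subset_leq_card/subsetP => j; rewrite !inE => /le_trans; apply.
apply: contraTT; rewrite -ltNge -ltnNge => lt_ba; apply: proper_card.
apply/properP; split; last by exists a; rewrite !inE ?lexx // leNgt lt_ba.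
by apply/subsetP => j; rewrite !inE => /le_trans; apply; rewrite ltW.
Qed.

Hypothesis key_inj : injective key.

Lemma key_rank_inj : injective key_rank.
Proof.
by move=> a b eq_ab; apply/key_inj/le_anti; rewrite -!leq_key_rank eq_ab leqnn.
Qed.

Lemma perm_key_rank : perm_eq [seq key_rank i | i <- enum T] (iota 1 #|T|).
Proof.
have uniq_ranks : uniq [seq key_rank i | i <- enum T].
  by rewrite map_inj_uniq ?enum_uniq //; apply: key_rank_inj.
apply: uniq_perm; rewrite ?iota_uniq //.
have [] // := uniq_min_size uniq_ranks (s2 := iota 1 #|T|).
- move=> _ /mapP[i _ ->]; rewrite mem_iota add1n ltnS max_card andbT.
  by apply/card_gt0P; exists i; rewrite inE.
- by rewrite size_map size_iota -cardE.
Qed.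

End KeyRank.

Section LexKey.
Variables (R : realFieldType) (n : nat).
Implicit Types (w : 'I_n -> R) (a b : 'I_n).

(* [rank] breaks ties between equal values by index: it is the rank for the
   lexicographic order on the pairs [(w i, i)]. *)
Definition lex_key w (i : 'I_n) : R *l nat := (w i, nat_of_ord i).

Lemma lex_key_inj w : injective (lex_key w).
Proof. by move=> a b [_ /val_inj]. Qed.

Lemma rankE w : rank w =1 key_rank (lex_key w).
Proof.
move=> i; rewrite /rank /key_rank -sum1_card [in RHS]big_mkcond /=.
apply: eq_bigr => j _; rewrite inE /psi lexi_pair /=.
by case: ltgtP.
Qed.

Lemma perm_rank w : perm_eq [seq rank w i | i <- enum 'I_n] (iota 1 n).
Proof.
rewrite (eq_map (rankE w)).
by have := perm_key_rank (@lex_key_inj w); rewrite card_ord.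
Qed.

Lemma leq_rank w a b : (rank w a <= rank w b)%N = (lex_key w a <= lex_key w b)%O.
Proof. by rewrite !rankE leq_key_rank. Qed.

Lemma lex_key_subr w w' (c : R) a b : w' a = w a - c -> w' b = w b - c ->
  (lex_key w' a <= lex_key w' b)%O = (lex_key w a <= lex_key w b)%O.
Proof. by move=> w'a w'b; rewrite !lexi_pair /= w'a w'b !lerD2r. Qed.

Lemma lex_key_ltW w a b : w a < w b -> (lex_key w a <= lex_key w b)%O.
Proof. by rewrite lexi_pair /= => lt_ab; rewrite ltW // leNgt lt_ab. Qed.

Lemma lex_key_decr w w' a b : w' a <= w a -> w' b = w b ->
  (lex_key w a <= lex_key w b)%O -> (lex_key w' a <= lex_key w' b)%O.
Proof.
rewrite !lexi_pair /= => le_a -> /andP[le_ab le_idx].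
rewrite (le_trans le_a le_ab); apply/implyP => le_ba.
by apply: (implyP le_idx); apply: le_trans le_ba le_a.
Qed.

End LexKey.

Lemma card_setU_le (T : finType) (S A B : {set T}) :
  (#|S| <= #|A|)%N -> S \subset A :|: B \/ [disjoint A & B] ->
  (#|S :|: B| <= #|A :|: B|)%N.
Proof.
move=> le_SA [sub_S | disj_AB].
  by apply/subset_leq_card; rewrite subUset sub_S subsetUr.
rewrite cardsU (cardsU A) (disjoint_setI0 disj_AB) cards0 subn0.
by rewrite (leq_trans (leq_subr _ _)) // leq_add2r.
Qed.

Section Kth.
Local Open Scope nat_scope.

Lemma leq_nth_count (u : seq nat) k x : sorted leq u -> k < size u ->
  (nth 0 u k <= x) = (k < count (leq^~ x) u).
Proof.
move=> sorted_u lt_k; set m := nth 0 u k.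
have : pairwise leq u by rewrite -sorted_pairwise //; apply: leq_trans.
rewrite -(cat_take_drop k u) (drop_nth 0 lt_k) pairwise_cat /= -/m.
case/and3P=> /allrelP below _ /andP[/allP above _].
rewrite count_cat /=; apply/idP/idP => [le_mx | ].
  suff -> : count (leq^~ x) (take k u) = k by rewrite le_mx add1n addnS ltnS leq_addr.
  rewrite -[RHS](size_takel (ltnW lt_k)); apply/eqP; rewrite -all_count.
  apply/allP => v v_in.
  by apply: leq_trans _ le_mx; apply: below; rewrite ?inE ?eqxx.
apply: contraTT; rewrite -ltnNge => lt_xm.
have -> : count (leq^~ x) (drop k.+1 u) = 0.
  apply/eqP; rewrite -leqn0 leqNgt -has_count; apply/hasPn => v /above.
  by rewrite -ltnNge; apply: leq_trans.
rewrite [m <= x]leqNgt lt_xm /= !addn0 -leqNgt.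
by rewrite (leq_trans (count_size _ _)) // size_take lt_k.
Qed.

Lemma kth_smallest_le (s t : seq nat) k : size s = size t ->
  (forall x, count (leq^~ x) t <= count (leq^~ x) s) ->
  kth_smallest s k <= kth_smallest t k.
Proof.
move=> size_st count_ts; rewrite /kth_smallest.
have sorted_sort u : sorted leq (sort leq u) by apply: sort_sorted; apply: leq_total.
have [lt_k | ge_k] := ltnP k.-1 (size t); last first.
  by rewrite !nth_default ?size_sort ?size_st.
set x := nth 0 (sort leq t) k.-1.
have lt_k' : k.-1 < size (sort leq s) by rewrite size_sort size_st.
rewrite leq_nth_count // count_sort.
apply: leq_trans (count_ts x); rewrite -(count_sort leq).
by rewrite -leq_nth_count ?size_sort.
Qed.

End Kth.

Section Ranks.
Variables (R : realFieldType) (n : nat) (z : 'I_n -> bool).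
Implicit Types (w : 'I_n -> R).

Lemma size_ranks_in w w' b : size (ranks_in w z b) = size (ranks_in w' z b).
Proof. by rewrite !size_map. Qed.

Lemma count_ranks_in w x :
  (count (leq^~ x) (ranks_in w z true) + count (leq^~ x) (ranks_in w z false))%N =
  count (leq^~ x) (iota 1 n).
Proof.
rewrite -count_cat -(permP (perm_rank w)); apply/permP.
rewrite /ranks_in -map_cat perm_map //.
have -> : [seq i <- enum 'I_n | z i == true] = [seq i <- enum 'I_n | z i].
  by apply: eq_filter => i; rewrite eqb_id.
have -> : [seq i <- enum 'I_n | z i == false] = [seq i <- enum 'I_n | ~~ z i].
  by apply: eq_filter => i; rewrite eqbF_neg.
by rewrite perm_filterC.
Qed.

Lemma count_control_ranks_le w w' x :
  (forall j, ~~ z j -> rank w j <= rank w' j)%N ->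
  (count (leq^~ x) (ranks_in w' z false) <= count (leq^~ x) (ranks_in w z false))%N.
Proof.
move=> le_ww'; rewrite !count_map !count_filter; apply: sub_count => j /=.
rewrite !andbT => /andP[le_jx /eqP zj].
by rewrite zj eqxx andbT (leq_trans _ le_jx) // le_ww' ?zj.
Qed.

Lemma count_treated_ranks_le w w' x :
  (forall j, ~~ z j -> rank w j <= rank w' j)%N ->
  (count (leq^~ x) (ranks_in w z true) <= count (leq^~ x) (ranks_in w' z true))%N.
Proof.
move=> le_ww'; rewrite -(leq_add2r (count (leq^~ x) (ranks_in w z false))).
rewrite count_ranks_in -(count_ranks_in w' x) leq_add2l.
exact: count_control_ranks_le.
Qed.

End Ranks.

Section Treated.
Variables (R : realFieldType) (n : nat) (y : 'I_n -> R) (z : 'I_n -> bool).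

Lemma shift_control [d : 'I_n -> R] i : ~~ z i -> shift y z d i = y i.
Proof. by rewrite /shift => /negbTE ->; rewrite subr0. Qed.

Lemma shift_treated [d : 'I_n -> R] i : z i -> shift y z d i = y i - d i.
Proof. by rewrite /shift => ->. Qed.

Lemma mem_treated_sorted i : (i \in treated_sorted y z) = z i.
Proof. by rewrite mem_sort mem_filter mem_enum andbT. Qed.

Lemma A_L_treated L i : i \in A_L y z L -> z i.
Proof. by move/mem_drop; rewrite mem_treated_sorted. Qed.

Lemma card_A_L L : (L <= n1 z)%N -> #|[set i in A_L y z L]| = L.
Proof.
have uniq_sorted : uniq (treated_sorted y z).
  by rewrite sort_uniq filter_uniq ?enum_uniq.
have size_sorted : size (treated_sorted y z) = n1 z.
  rewrite size_sort /n1 cardsE cardE /enum_mem -filter_predI.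
  by congr size; apply: eq_filter => i /=; rewrite andbT.
move=> le_L; rewrite cardsE (card_uniqP _) ?drop_uniq //.
by rewrite size_drop size_sorted subKn.
Qed.

Lemma rank_le_A_L L t a : z t -> t \notin A_L y z L -> a \in A_L y z L ->
  (rank y t <= rank y a)%N.
Proof.
set s := treated_sorted y z; set m := (n1 z - L)%N => zt tA aA.
have t_head : t \in take m s.
  have : t \in s by rewrite mem_treated_sorted.
  by rewrite -{1}(cat_take_drop m s) mem_cat (negbTE tA) orbF.
have : sorted (fun a b => rank y a <= rank y b)%N s.
  by apply: sort_sorted => a' b'; apply: leq_total.
rewrite sorted_pairwise; last by move=> b' a' d; apply: leq_trans.
rewrite -(cat_take_drop m s) pairwise_cat => /and3P[/allrelP top _ _].
exact: top.
Qed.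

Lemma le_max_treated i : z i -> y i <= max_treated y z.
Proof.
move=> zi; rewrite /max_treated; case: pickP => [i0 _ | /(_ i)]; last by rewrite zi.
exact: le_bigmax_cond.
Qed.

Lemma min_control_le i : ~~ z i -> min_control y z <= y i.
Proof.
move=> zi; rewrite /min_control; case: pickP => [i0 _ | /(_ i)]; last by rewrite zi.
exact: bigmin_le_cond.
Qed.

End Treated.

Section ControlRank.
Variables (R : realFieldType) (n : nat) (z : 'I_n -> bool) (y : 'I_n -> R).
Variables (L : nat) (c kappa : R) (delta : 'I_n -> R).
Hypotheses (le_L : (L <= n1 z)%N) (kappa_gt0 : 0 < kappa).
Hypothesis delta_in_H : in_H_L z L c delta.

Local Notation A := [set i in A_L y z L].
Local Notation T := [set i | z i].
Local Notation S := [set i | z i && (c < delta i)].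
Local Notation wd := (shift y z delta).
Local Notation we := (shift y z (eta_L y z L c kappa)).
Local Notation v := (shift y z (fun=> c)).
Local Notation below w j := [set k | (lex_key w k <= lex_key w j)%O].
Local Notation B j := [set k | z k && (lex_key v k <= lex_key v j)%O].

(* [gamma] exceeds every treated-minus-control gap by [kappa]. *)
Lemma shift_eta_lt_control a j : a \in A_L y z L -> ~~ z j -> we a < y j.
Proof.
move=> aA zj; have za := A_L_treated aA.
rewrite shift_treated // /eta_L aA /gamma.
move: kappa_gt0 (le_max_treated y za) (min_control_le y zj); lra.
Qed.

Lemma treated_below_eta j : ~~ z j -> below we j :&: T = A :|: B j.
Proof.
move=> zj; apply/setP => k; rewrite !inE.
have [kA | kA] := boolP (k \in A_L y z L).
  rewrite (A_L_treated kA) andbT; apply: lex_key_ltW.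
  by rewrite (shift_control y zj); apply: shift_eta_lt_control.
have [zk | zk] /= := boolP (z k); last by rewrite andbF.
rewrite andbT /lex_key !(shift_control y zj) !(shift_treated y zk).
by rewrite /eta_L (negbTE kA).
Qed.

Lemma treated_below_delta j : ~~ z j -> below wd j :&: T \subset S :|: B j.
Proof.
move=> zj; apply/subsetP => k; rewrite !inE => /andP[le_kj zk]; rewrite zk /=.
have [//|le_dc] /= := ltP c (delta k).
apply: lex_key_decr le_kj; last by rewrite !(shift_control y zj).
by rewrite !(shift_treated y zk) lerD2l lerN2.
Qed.

Lemma control_below_eq j : ~~ z j -> below wd j :\: T = below we j :\: T.
Proof.
move=> zj; apply/setP => k; rewrite !inE.
have [//|zk] /= := boolP (z k).
by rewrite /lex_key !(shift_control y zj) !(shift_control y zk).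
Qed.

(* A treated unit outside [A] that lies above [j] has all of [A] above it. *)
Lemma treated_sub_or_disjoint j : T \subset A :|: B j \/ [disjoint A & B j].
Proof.
have [sub_T | /subsetPn[t zt t_out]] := boolP (T \subset A :|: B j).
  by left.
right; rewrite inE in zt; move: t_out; rewrite !inE zt /= => /norP[tA not_tj].
rewrite -setI_eq0; apply/eqP/setP => a; rewrite !inE.
apply/negbTE/and3P => -[aA za le_aj].
move/negP: not_tj; apply; apply: le_trans le_aj.
rewrite (lex_key_subr (w := y) (c := c)) ?shift_treated // -leq_rank.
exact: (rank_le_A_L zt tA aA).
Qed.

Lemma control_rank_le j : ~~ z j -> (rank wd j <= rank we j)%N.
Proof.
move=> zj; rewrite !rankE /key_rank.
rewrite -(cardsID T (below wd j)) -(cardsID T (below we j)) control_below_eq //.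
rewrite leq_add2r treated_below_eta //.
apply: leq_trans (subset_leq_card (treated_below_delta zj)) _.
apply: card_setU_le; first by rewrite card_A_L.
case: (treated_sub_or_disjoint j) => [sub_T | ]; [left | by right].
by apply: subset_trans sub_T; apply/subsetP => k; rewrite !inE => /andP[].
Qed.

End ControlRank.

Theorem lemma6 (R : realFieldType) (n : nat) (z : 'I_n -> bool) (y : 'I_n -> R)
  (L : nat) (c kappa : R) :
  (L <= n1 z)%N -> 0 < kappa ->
  forall delta : 'I_n -> R, in_H_L z L c delta ->
  (forall k : nat, (1 <= k <= n1 z)%N ->
     (kth_smallest (ranks_in (shift y z (eta_L y z L c kappa)) z true) k
      <= kth_smallest (ranks_in (shift y z delta) z true) k)%N) /\
  (forall k : nat, (1 <= k <= n - n1 z)%N ->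
     (kth_smallest (ranks_in (shift y z delta) z false) k
      <= kth_smallest (ranks_in (shift y z (eta_L y z L c kappa)) z false) k)%N).
Proof.
move=> le_L kappa_gt0 delta delta_in_H.
have le_control := control_rank_le y le_L kappa_gt0 delta_in_H.
split=> k _; apply: kth_smallest_le; try exact: size_ranks_in.
  by move=> x; apply: count_treated_ranks_le.
by move=> x; apply: count_control_ranks_le.
Qed.
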